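(* Let $n\ge 2$, $c=(c_1,\dots,c_n)^T$ with $c_k>0$ for all $k$, $e=(1,\dots,1)^T\in\mathbb{R}^n$, $D=\mathrm{diag}\{c_1^{-2},\dots,c_n^{-2}\}$. Let $\mathcal{E_D}=\{x\in\mathbb{R}^n:\sum_{k=1}^n (x_k-c_k)^2/c_k^2\le 1\}$ be the Dikin ellipsoid and $\mathcal{H}=\{x\in\mathbb{R}^n: e^Tx=e^Tc\}$. Define $$Q=D+\frac{n-1}{(e^Tc)^2}ee^T-\frac{1}{e^Tc}(ec^TD+Dce^T)=D+\sum_{i=1}^n\sum_{j=1}^n\left(\frac{n-1}{(e^Tc)^2}-\frac{1}{e^Tc}\left(\frac{1}{c_i}+\frac{1}{c_j}\right)\right)E_{ij}.$$ Then the Lorenz cone with vertex at the origin and base $\mathcal{H}\cap\mathcal{E_D}$, together with its reflection through the origin, is represented by $Q$: $$\{x\in\mathbb{R}^n: x^TQx\le 0\}=\{\lambda y:\ \lambda\in\mathbb{R},\ y\in\mathcal{H}\cap\mathcal{E_D}\}.$$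
   Context: $E_{ij}$ denotes the $n\times n$ matrix whose $(i,j)$ entry is $1$ and all other entries are $0$. *)

From HB Require Import structures.
From mathcomp Require Import all_boot all_order all_algebra.
From mathcomp Require Import reals.
Set Implicit Arguments. Unset Strict Implicit. Unset Printing Implicit Defensive.
Import Order.TTheory GRing.Theory Num.Theory.
Local Open Scope ring_scope.

Section Defs.
Variable R : realType.
Variable n : nat.
Implicit Types (c x y : 'cV[R]_n).

Definition evec : 'cV[R]_n := const_mx 1.

Definition eT (v : 'cV[R]_n) : R := (evec^T *m v) 0 0.

Definition Dmat c : 'M[R]_n := diag_mx (\row_k (c k 0)^-2).

Definition Qmat c : 'M[R]_n :=
  Dmat c + ((n%:R - 1) / (eT c) ^+ 2) *: (evec *m evec^T)
  - (eT c)^-1 *: (evec *m c^T *m Dmat c + Dmat c *m c *m evec^T).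

Definition dikin c y : Prop := \sum_(k < n) (y k 0 - c k 0) ^+ 2 / (c k 0) ^+ 2 <= 1.

Definition hyper c y : Prop := eT y = eT c.

Definition qform (Q : 'M[R]_n) x : R := (x^T *m Q *m x) 0 0.
End Defs.

(* On the hyperplane e^T y = e^T c the form satisfies
   y^T Q y = sum_k (y_k / c_k - 1)^2 - 1, so there it is nonpositive exactly on
   the Dikin ellipsoid.  Since x |-> x^T Q x is homogeneous of degree 2, this
   settles every x with e^T x <> 0, which is a multiple of a point of H.  When
   e^T x = 0 the form reduces to sum_k (x_k / c_k)^2, which is nonpositive only
   at x = 0 = 0 * c. *)
From mathcomp Require Import all_boot all_order all_algebra.
From mathcomp Require Import reals ring.
Import Order.TTheory GRing.Theory Num.Theory.
Set Implicit Arguments. Unset Strict Implicit.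
Local Open Scope ring_scope.

Section QuadraticForm.
Variables (R : realType) (n : nat).
Implicit Types (A B : 'M[R]_n) (u v x : 'cV[R]_n).

Lemma qformD A B x : qform (A + B) x = qform A x + qform B x.
Proof. by rewrite /qform mulmxDr mulmxDl mxE. Qed.

Lemma qformN A x : qform (- A) x = - qform A x.
Proof. by rewrite /qform mulmxN mulNmx mxE. Qed.

Lemma qformZ a A x : qform (a *: A) x = a * qform A x.
Proof. by rewrite /qform -scalemxAr -scalemxAl mxE. Qed.

Lemma qform_scale a A x : qform A (a *: x) = a ^+ 2 * qform A x.
Proof. by rewrite /qform !linearZ /= -!scalemxAl scalerA mxE expr2. Qed.

Lemma qform_diag (d : 'rV[R]_n) x :
  qform (diag_mx d) x = \sum_k d 0 k * x k 0 ^+ 2.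
Proof.
rewrite /qform mul_mx_diag mxE; apply: eq_bigr => k _.
by rewrite !mxE mulrAC mulrC expr2.
Qed.

Lemma qform_dyad u v x : qform (u *m v^T) x = (u^T *m x) 0 0 * (v^T *m x) 0 0.
Proof.
rewrite /qform mulmxA -mulmxA mxE big_ord1; congr (_ * _).
by rewrite -[x^T *m u]trmxK trmx_mul trmxK mxE.
Qed.

Lemma eT_sum v : eT v = \sum_k v k 0.
Proof. by rewrite /eT mxE; apply: eq_bigr => k _; rewrite !mxE mul1r. Qed.

Lemma eTZ a v : eT (a *: v) = a * eT v.
Proof. by rewrite /eT -scalemxAr mxE. Qed.

Lemma eT_gt0 v : (0 < n)%N -> (forall k, 0 < v k 0) -> 0 < eT v.
Proof.
move=> n_gt0 v_gt0; rewrite eT_sum (bigD1 (Ordinal n_gt0)) //=.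
by apply: ltr_pwDl (v_gt0 _) _; apply: sumr_ge0 => k _; apply: ltW.
Qed.

End QuadraticForm.

Section LorenzCone.
Variables (R : realType) (n : nat) (c : 'cV[R]_n).
Hypotheses (n_gt0 : (0 < n)%N) (c_gt0 : forall k, 0 < c k 0).
Implicit Types (x y : 'cV[R]_n).

Local Notation e := (evec R n).

Let c_neq0 k : c k 0 != 0. Proof. by rewrite gt_eqF. Qed.
Let eTc_neq0 : eT c != 0. Proof. by rewrite gt_eqF ?eT_gt0. Qed.

Lemma Dmat_mul_c : Dmat c *m c = \col_k (c k 0)^-1.
Proof.
apply/matrixP => i j; rewrite mul_diag_mx !mxE ord1.
by rewrite -exprVn expr2 -mulrA mulVf ?mulr1.
Qed.

Lemma Qmat_dyadic : Qmat c = Dmat c + ((n%:R - 1) / eT c ^+ 2) *: (e *m e^T)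
  - (eT c)^-1 *: (e *m (\col_k (c k 0)^-1)^T + \col_k (c k 0)^-1 *m e^T).
Proof. by rewrite /Qmat -Dmat_mul_c trmx_mul tr_diag_mx mulmxA. Qed.

Lemma qform_Qmat x : qform (Qmat c) x = \sum_k (x k 0 / c k 0) ^+ 2
  + (n%:R - 1) / eT c ^+ 2 * eT x ^+ 2 - (eT c)^-1 * (2 * eT x * \sum_k x k 0 / c k 0).
Proof.
have recip_dot : ((\col_k (c k 0)^-1)^T *m x) 0 0 = \sum_k x k 0 / c k 0.
  by rewrite mxE; apply: eq_bigr => k _; rewrite !mxE mulrC.
rewrite Qmat_dyadic !(qformD, qformN, qformZ) !qform_dyad recip_dot qform_diag.
congr (_ + _ - _ * _); last by rewrite -/(eT x); ring.
by apply: eq_bigr => k _; rewrite mxE exprMn exprVn mulrC.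
Qed.

Lemma qform_Qmat_hyper y :
  hyper c y -> qform (Qmat c) y = \sum_k (y k 0 - c k 0) ^+ 2 / c k 0 ^+ 2 - 1.
Proof.
move=> hy; rewrite qform_Qmat hy.
have -> : \sum_k (y k 0 - c k 0) ^+ 2 / c k 0 ^+ 2 =
    \sum_k (y k 0 / c k 0) ^+ 2 - 2 * \sum_k y k 0 / c k 0 + n%:R.
  have -> : n%:R = \sum_(k < n) (1 : R) by rewrite sumr_const card_ord.
  rewrite mulr_sumr -sumrB -big_split; apply: eq_bigr => k _ /=.
  by field.
by field.
Qed.

Lemma qform_Qmat_eT0 x : eT x = 0 -> qform (Qmat c) x = \sum_k (x k 0 / c k 0) ^+ 2.
Proof. by move=> hx; rewrite qform_Qmat hx; ring. Qed.

Lemma eq0_of_sum_sqr_div_le0 x : \sum_k (x k 0 / c k 0) ^+ 2 <= 0 -> x = 0.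
Proof.
move=> hx; apply/matrixP => i j; rewrite ord1 mxE.
have sum0 : \sum_k (x k 0 / c k 0) ^+ 2 = 0.
  by apply/eqP; rewrite eq_le hx sumr_ge0 // => k _; apply: sqr_ge0.
have /eqP := psumr_eq0P (fun k _ => sqr_ge0 (x k 0 / c k 0)) sum0 (i := i) isT.
by rewrite sqrf_eq0 mulf_eq0 invr_eq0 (negbTE (c_neq0 i)) orbF => /eqP.
Qed.

Lemma dikin_center : dikin c c.
Proof. by rewrite /dikin big1 ?ler01 // => k _; rewrite subrr expr0n mul0r. Qed.

End LorenzCone.

Theorem mainTheorem7 (R : realType) (n : nat) (hn : (2 <= n)%N) (c : 'cV[R]_n)
  (hc : forall k : 'I_n, 0 < c k 0) (x : 'cV[R]_n) :
  qform (Qmat c) x <= 0 <->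
  exists (lam : R) (y : 'cV[R]_n), hyper c y /\ dikin c y /\ x = lam *: y.
Proof.
have n_gt0 : (0 < n)%N by apply: ltnW.
have eTc_neq0 : eT c != 0 by rewrite gt_eqF ?eT_gt0.
split=> [hq | [lam [y [hy [hd ->]]]]]; last first.
  rewrite qform_scale qform_Qmat_hyper //.
  by apply: mulr_ge0_le0 (sqr_ge0 _) _; rewrite subr_le0; exact: hd.
have [tx0 | tx_neq0] := eqVneq (eT x) 0.
  exists 0, c; split=> //; split; first exact: dikin_center.
  by rewrite scale0r; apply: eq0_of_sum_sqr_div_le0 => //; rewrite -qform_Qmat_eT0.
pose lam := eT x / eT c.
have lam_neq0 : lam != 0 by rewrite mulf_neq0 ?invr_eq0.
have hy : hyper c (lam^-1 *: x) by rewrite /hyper eTZ /lam; field; apply/andP.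
exists lam, (lam^-1 *: x); split=> //; split; last by rewrite scalerA mulfV ?scale1r.
rewrite /dikin -subr_le0 -qform_Qmat_hyper // qform_scale.
exact: mulr_ge0_le0 (sqr_ge0 _) hq.
Qed.
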